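(* For every $k\in\{1,\dots,d-1\}$, every $l\in\{k,\dots,d\}$, every $S\in\Delta_l(\hat T)$ and every $n\in\{1,\dots,N^{k-1}_S\}$, $$\phi^{k,\mathrm{II}}_{S,n}=\mathrm d^{k-1}\phi^{k-1,\mathrm I}_{S,n},$$ where $\phi^{k-1,\mathrm I}_{S,n}$ is the type-I basis function of $X^{k-1}(\hat T)$ and $\phi^{k,\mathrm{II}}_{S,n}$ the type-II basis function of $X^k(\hat T)$.
   Context: Let $d\in\{2,3\}$ and let $\hat T\subset\mathbb R^d$ be an equilateral reference simplex; $\Delta_l(\hat T)$ denotes its $l$-dimensional subsimplices, $(\cdot,\cdot)_S$ the $L^2(S)$ inner product. Exterior derivatives $\mathrm d^0=\nabla,\mathrm d^1=\nabla\times,\mathrm d^2=\nabla\cdot,\mathrm d^3=0$ (3D; analogous in 2D). Fix an exact polynomial complex $X^0(\hat T)\to\cdots\to X^d(\hat T)\to0$ given by one of the standard first-kind, second-kind or hybrid finite element subcomplexes of the $L^2$ de Rham complex. Traces $\mathrm{tr}^k_S$: restriction ($k=0$), tangential projection ($k=1$), normal component ($k=2$ on a face), identity on $\hat T$. Surface derivatives $\mathrm d^k_S$ satisfy $\mathrm d^k_S\mathrm{tr}^k_Sv=\mathrm{tr}^{k+1}_S\mathrm d^kv$ and $\mathrm d^k_S\mathrm d^{k-1}_S=0$. For $\dim S\ge k+1$: $\mathring X^k(S)=\{\mathrm{tr}^k_Sv:v\in X^k(\hat T),\mathrm{tr}^k_{\partial S}v=0\}$; $\mathring X^{k,\mathrm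 I}(S)$ is the $L^2(S)$-orthogonal complement in $\mathring X^k(S)$ of $\ker\mathrm d^k_S$; $N^k_S=\dim\mathring X^{k,\mathrm I}(S)$, $N^k_S=1$ if $\dim S=k$, $N^{-1}_S=0$. For each $m\in\{0,\dots,d-1\}$ and each $S$ fix a basis $\{\psi^m_{S,j}\}$ of $\mathring X^{m,\mathrm I}(S)$ with $(\mathrm d^m_S\psi^m_{S,j},\mathrm d^m_S\psi^m_{S,i})_S=\delta_{ij}$, $(\psi^m_{S,j},\psi^m_{S,i})_S=\lambda_{S,j}\delta_{ij}$; the same bases are used in the degrees of freedom of all spaces $X^m(\hat T)$. Degrees of freedom on $X^m(\hat T)$: $\ell^{m,\mathrm I}_{S,1}(v)=(1,\mathrm{tr}^m_Sv)_S$, $S\in\Delta_m(\hat T)$ (point evaluation if $m=0$); $\ell^{m,\mathrm I}_{S,j}(v)=(\mathrm d^m_S\psi^m_{S,j},\mathrm d^m_S\mathrm{tr}^m_Sv)_S$, $j\le N^m_S$, $\dim S\in\{m+1,\dots,d\}$; $\ell^{m,\mathrm{II}}_{S,j}(v)=(\mathrm d^{m-1}_S\psi^{m-1}_{S,j},\mathrm{tr}^m_Sv)_S$, $j\le N^{m-1}_S$, $\dim S\in\{m,\dots,d\}$. They are unisolvent; $\{\phi^{m,\mathrm I}_{S,j},\phi^{m,\mathrm{II}}_{S,n}\}$ denotes the dual basis of $X^m(\hat T)$. *)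

From HB Require Import structures.
From mathcomp Require Import all_boot all_order all_algebra.
From mathcomp Require Import reals.
Set Implicit Arguments. Unset Strict Implicit. Unset Printing Implicit Defensive.
Import Order.TTheory GRing.Theory Num.Theory.
Local Open Scope ring_scope.

(* Subsimplices of the reference simplex are the nonempty subsets S of its
   d+1 vertices 'I_d.+1; dim S = #|S| - 1. *)
Notation simplex d := {set 'I_d.+1}.

Unset Implicit Arguments.
Record FEComplex (R : realType) (d : nat) := {
  X : nat -> lmodType R;
  dX : forall m, {linear X m -> X m.+1};
  (* Tr m S : a space containing the traces tr^m_S of m-forms on S (L^2 Lambda^m(S)) *)
  Tr : nat -> simplex d -> lmodType R;
  (* L^2(S) inner product (point evaluation product when dim S = 0) *)
  ip : forall m S, Tr m S -> Tr m S -> R;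
  tr : forall m S, {linear X m -> Tr m S};
  dS : forall m S, {linear Tr m S -> Tr m.+1 S};
  (* the (oriented) constant 1 on an m-simplex, used in (1, tr^m_S v)_S *)
  one : forall m S, Tr m S;
  (* relative orientation coefficients of a facet F of S (Stokes formula) *)
  orient : simplex d -> simplex d -> R;
  ip_sym : forall m S x y, ip m S x y = ip m S y x;
  ip_linear : forall m S a x y z, ip m S (a *: x + y) z = a * ip m S x z + ip m S y z;
  ip_posdef : forall m S x, x != 0 -> 0 < ip m S x x;
  tr_T_inj : forall m, injective (tr m setT);
  tr_d : forall m S v, dS m S (tr m S v) = tr m.+1 S (dX m v);
  dS_dS : forall m S w, dS m.+1 S (dS m S w) = 0;
  exact_mid : forall m (v : X m.+1), (m.+1 <= d)%N -> dX m.+1 v = 0 ->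
      exists u : X m, v = dX m u;
  exact_top : forall v : X d, dX d v = 0;
  stokes : forall m (S : simplex d) (v : X m), #|S| = m.+2 ->
      ip m.+1 S (one m.+1 S) (tr m.+1 S (dX m v)) =
      \sum_(F : simplex d | (F \subset S) && (#|F| == m.+1))
         orient S F * ip m F (one m F) (tr m F v)
}.
Set Implicit Arguments.
Arguments X {R d}. Arguments dX {R d}. Arguments Tr {R d}. Arguments ip {R d}.
Arguments tr {R d}. Arguments dS {R d}. Arguments one {R d}. Arguments orient {R d}.

Section Defs.
Variables (R : realType) (d : nat) (C : FEComplex R d).
Variable N : nat -> simplex d -> nat.
Variable psi : forall m S, nat -> Tr C m S.        (* psi^m_{S,j}, j = 0..N-1 *)

Definition inXring m (S : simplex d) (w : Tr C m S) : Prop :=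
  exists v : X C m, w = tr C m S v /\
    forall F : simplex d, F \proper S -> (m.+1 <= #|F|)%N -> tr C m F v = 0.

Definition inXI m (S : simplex d) (w : Tr C m S) : Prop :=
  inXring w /\ forall z, inXring z -> dS C m S z = 0 -> ip C m S w z = 0.

Definition bases_ok : Prop :=
  forall m (S : simplex d), (m.+2 <= #|S|)%N ->
  [/\ forall j, (j < N m S)%N -> inXI (psi m S j),
      forall i j, (i < N m S)%N -> (j < N m S)%N ->
        ip C m.+1 S (dS C m S (psi m S i)) (dS C m S (psi m S j)) = (i == j)%:R,
      forall i j, (i < N m S)%N -> (j < N m S)%N -> i != j ->
        ip C m S (psi m S i) (psi m S j) = 0
    & forall w, inXI w -> exists c : nat -> R,
        w = \sum_(j < N m S) c j *: psi m S j].

(* DOF labels: (true, S, j) = type I, (false, S, j) = type II; j counts from 0 *)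
Definition lab := (bool * simplex d * nat)%type.

Definition validI m (S : simplex d) j : bool :=
  (m.+1 <= #|S|)%N && (j < if #|S| == m.+1 then 1 else N m S)%N.
Definition validII m (S : simplex d) j : bool :=
  match m with 0 => false | m'.+1 => (m'.+2 <= #|S|)%N && (j < N m' S)%N end.
Definition valid m (a : lab) : bool :=
  let: (t, s, j) := a in if t then validI m s j else validII m s j.

Definition dofI m (S : simplex d) (j : nat) (v : X C m) : R :=
  if #|S| == m.+1 then ip C m S (one C m S) (tr C m S v)
  else ip C m.+1 S (dS C m S (psi m S j)) (dS C m S (tr C m S v)).

Definition dofII m : simplex d -> nat -> X C m -> R :=
  match m as m0 return simplex d -> nat -> X C m0 -> R with
  | 0 => fun _ _ _ => 0
  | m'.+1 => fun S j v => ip C m'.+1 S (dS C m' S (psi m' S j)) (tr C m'.+1 S v)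
  end.

Definition dof m (a : lab) (v : X C m) : R :=
  let: (t, s, j) := a in if t then dofI s j v else dofII s j v.

Definition unisolvent m : Prop :=
  forall v : X C m, (forall a, valid m a -> dof a v = 0) -> v = 0.

Definition dual_basis (phi : forall m, lab -> X C m) m : Prop :=
  forall a b, valid m a -> valid m b -> dof a (phi m b) = (a == b)%:R.

End Defs.

(* The degrees of freedom of type II on X^k are exactly the type-I degrees of
   freedom on X^{k-1} precomposed with d^{k-1}, since tr^k_S d^{k-1} = d^{k-1}_S tr^{k-1}_S.
   For the other degrees of freedom, d^{k-1} phi^{k-1,I}_{S,n} is annihilated:
   type-I functionals on simplices of dimension > k involve d^k_S d^{k-1}_S = 0, and
   on a k-simplex Stokes' formula reduces them to the lowest-order type-I functionals
   of phi^{k-1,I}_{S,n} on its facets, which vanish since S has dimension >= k.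
   Hence d^{k-1} phi^{k-1,I}_{S,n} has the defining degrees of freedom of
   phi^{k,II}_{S,n}, and unisolvence identifies the two. *)
From HB Require Import structures.
From mathcomp Require Import all_boot all_order all_algebra.
From mathcomp Require Import reals.
Import Order.TTheory GRing.Theory Num.Theory.
Local Open Scope ring_scope.

Section DualBasisDerivative.
Variables (R : realType) (d : nat) (C : FEComplex R d).
Variables (N : nat -> simplex d -> nat) (psi : forall m S, nat -> Tr C m S).

Lemma ipBr m S (x y z : Tr C m S) : ip C m S x (y - z) = ip C m S x y - ip C m S x z.
Proof.
rewrite ip_sym (@ip_sym R d C m S x y) (@ip_sym R d C m S x z) -scaleN1r addrC.
by rewrite ip_linear mulN1r addrC.
Qed.

Lemma ip0r m S (x : Tr C m S) : ip C m S x 0 = 0.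
Proof. by rewrite -(subrr (0 : Tr C m S)) ipBr subrr. Qed.

Lemma dofB m (a : lab d) (x y : X C m) :
  dof psi a (x - y) = dof psi a x - dof psi a y.
Proof.
case: a => [[[] F] j] /=.
  by rewrite /dofI; case: ifP => _; rewrite !raddfB /= ipBr.
by case: m x y => [|m] x y /=; [rewrite subrr | rewrite raddfB /= ipBr].
Qed.

Lemma eq_dual_basis (phi : forall m, lab d -> X C m) m (b : lab d) (v : X C m) :
  unisolvent N psi m -> dual_basis N psi phi m -> valid N m b ->
  (forall a, valid N m a -> dof psi a v = (a == b)%:R) ->
  phi m b = v.
Proof.
move=> uniso dual vb dof_v; apply/eqP; rewrite -subr_eq0; apply/eqP.
by apply: uniso => a va; rewrite dofB dual // dof_v // subrr.
Qed.

Lemma dofI_dX_facets m (S : simplex d) j (u : X C m) : #|S| = m.+2 ->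
  dofI psi S j (dX C m u) =
  \sum_(F : simplex d | (F \subset S) && (#|F| == m.+1)) orient C S F * dofI psi F 0 u.
Proof.
move=> cardS; rewrite /dofI cardS eqxx stokes //.
by apply: eq_bigr => F /andP [_ ->].
Qed.

Lemma dofI_dX_high m (S : simplex d) j (u : X C m) : #|S| != m.+2 ->
  dofI psi S j (dX C m u) = 0.
Proof. by rewrite /dofI => /negbTE ->; rewrite -tr_d dS_dS ip0r. Qed.

Lemma dofII_dX m (S : simplex d) j (u : X C m) : (m.+2 <= #|S|)%N ->
  dofII psi S j (dX C m u) = dofI psi S j u.
Proof.
move=> cardS; rewrite /= /dofI -tr_d ifN //.
by rewrite neq_ltn cardS orbT.
Qed.

Variable phi : forall m, lab d -> X C m.
Variable m : nat.
Hypotheses (uniso : unisolvent N psi m.+1) (dual : dual_basis N psi phi m)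
  (dual1 : dual_basis N psi phi m.+1).

Lemma validI_high {S : simplex d} {n : nat} :
  (m.+2 <= #|S|)%N -> (n < N m S)%N -> valid N m (true, S, n).
Proof.
by move=> cardS ltn; rewrite /= /validI ifN ?(ltnW cardS) // neq_ltn cardS orbT.
Qed.

Lemma dofI_dual_facet (S F : simplex d) n : (m.+2 <= #|S|)%N -> (n < N m S)%N ->
  #|F| = m.+1 -> dofI psi F 0 (phi m (true, S, n)) = 0.
Proof.
move=> cardS ltn cardF.
have vF : valid N m (true, F, 0%N) by rewrite /= /validI cardF eqxx leqnn.
rewrite -[LHS]/(dof psi (true, F, 0%N) _) (dual _ _ vF (validI_high cardS ltn)).
by case: eqP => // -[eFS _]; move: cardS; rewrite -eFS cardF ltnn.
Qed.

Lemma dX_dual_typeI (S : simplex d) n : (m.+2 <= #|S|)%N -> (n < N m S)%N ->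
  phi m.+1 (false, S, n) = dX C m (phi m (true, S, n)).
Proof.
move=> cardS ltn; apply: eq_dual_basis => //; first by rewrite /= cardS.
case=> [[[] F] j] /= vFj.
  have [cardF|cardF] := eqVneq #|F| m.+2; last by rewrite dofI_dX_high.
  rewrite dofI_dX_facets // big1 // => G /andP [_ /eqP cardG].
  by rewrite dofI_dual_facet ?mulr0.
move: vFj => /andP [cardF ltj].
rewrite -[LHS]/(dofII psi F j (dX C m _)) dofII_dX //.
rewrite -[LHS]/(dof psi (true, F, j) _).
rewrite (dual _ _ (validI_high cardF ltj) (validI_high cardS ltn)).
by congr (_%:R); apply/eqP/eqP => -[-> ->].
Qed.

End DualBasisDerivative.

Theorem mainTheorem4 (R : realType) (d : nat) (C : FEComplex R d)
    (N : nat -> simplex d -> nat) (psi : forall m S, nat -> Tr C m S)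
    (phi : forall m, lab d -> X C m) :
  (d = 2%N \/ d = 3%N) ->
  bases_ok N psi ->
  (forall m, (m <= d)%N -> unisolvent N psi m) ->
  (forall m, (m <= d)%N -> dual_basis N psi phi m) ->
  forall m, (m.+2 <= d)%N ->
  forall S : simplex d, (m.+2 <= #|S|)%N ->
  forall n, (n < N m S)%N ->
  phi m.+1 (false, S, n) = dX C m (phi m (true, S, n)).
Proof.
move=> _ _ uniso dual m ltmd S cardS n ltn.
have ltm1d : (m.+1 <= d)%N := ltnW ltmd.
exact: dX_dual_typeI (uniso _ ltm1d) (dual _ (ltnW ltm1d)) (dual _ ltm1d) _ _ cardS ltn.
Qed.
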